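(* For $n\ge1$, $\left|\Pi_n\wr C_2(1^11^2,1^12^2,1^21^1)\right|=\sum_{i=0}^nB(i)B(n-i)$, where $B(m)$ is the $m$th Bell number.
   Context: For $n\ge0$ let $[n]=\{1,\dots,n\}$. A $2$-colored set partition of $[n]$ is a set partition of $[n]$ together with an assignment of a color from $\{1,2\}$ to each element; $\Pi_n\wr C_2$ is the set of these. For a set $S$ of patterns, $\Pi_n\wr C_2(S)$ is the set of such colored partitions avoiding every pattern in $S$ in the pattern sense. For the patterns used here: $\sigma$ contains $1^11^2$ iff there are $i<j$ in the same block with $i$ colored $1$ and $j$ colored $2$; $1^21^1$ iff there are $i<j$ in the same block with $i$ colored $2$ and $j$ colored $1$; $1^12^2$ iff there are $i<j$ in different blocks with $i$ colored $1$ and $j$ colored $2$. $B(m)$ is the number of set partitions of $[m]$, with $B(0)=1$. *)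

From mathcomp Require Import all_boot.
Set Implicit Arguments. Unset Strict Implicit. Unset Printing Implicit Defensive.

(* [n] = {1..n} is modelled by 'I_n = {0..n-1} (order-preserving shift).
   Colours {1,2} are modelled by 'I_2: ordinal 0 = colour 1, ordinal 1 = colour 2. *)

Definition col1 : 'I_2 := @Ordinal 2 0 isT.
Definition col2 : 'I_2 := @Ordinal 2 1 isT.

Definition bell (m : nat) : nat :=
  #|[set P : {set {set 'I_m}} | partition P [set: 'I_m]]|.

Definition colored_partition (n : nat) := ({set {set 'I_n}} * {ffun 'I_n -> 'I_2})%type.

Definition is_cpart n (x : colored_partition n) : bool :=
  partition x.1 [set: 'I_n].

Definition same_block n (P : {set {set 'I_n}}) (i j : 'I_n) : bool :=
  [exists B in P, (i \in B) && (j \in B)].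

Definition contains_1112 n (x : colored_partition n) : bool :=
  [exists i : 'I_n, exists j : 'I_n,
     [&& i < j, same_block x.1 i j, x.2 i == col1 & x.2 j == col2]].

Definition contains_1211 n (x : colored_partition n) : bool :=
  [exists i : 'I_n, exists j : 'I_n,
     [&& i < j, same_block x.1 i j, x.2 i == col2 & x.2 j == col1]].

Definition contains_1122 n (x : colored_partition n) : bool :=
  [exists i : 'I_n, exists j : 'I_n,
     [&& i < j, ~~ same_block x.1 i j, x.2 i == col1 & x.2 j == col2]].

Definition avoiders (n : nat) : {set colored_partition n} :=
  [set x | [&& is_cpart x, ~~ contains_1112 x, ~~ contains_1122 x
             & ~~ contains_1211 x]].

From mathcomp Require Import all_boot.
From mathcomp Require Import zify.
Set Implicit Arguments. Unset Strict Implicit. Unset Printing Implicit Defensive.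

(* Avoiding 1^1 1^2 and 1^1 2^2 means that no element of colour 1 precedes an
   element of colour 2, so the colouring is 2...21...1, with colour 2 exactly on
   an initial segment [0, k).  Avoiding 1^2 1^1 then says that no block meets
   both [0, k) and [k, n), so the partition is a partition of [0, k) together
   with a partition of [k, n): there are B(k) B(n - k) of them. *)

Lemma card_in_bij (T U : finType) (A : {set T}) (B : {set U}) (f : T -> U) (g : U -> T) :
  {in A, forall x, f x \in B} -> {in B, forall y, g y \in A} ->
  {in A, cancel f g} -> {in B, cancel g f} -> #|A| = #|B|.
Proof.
move=> fA gB fK gK.
have f_inj : {in A &, injective f}.
  by move=> x y xA yA fxy; rewrite -(fK x xA) -(fK y yA) fxy.
rewrite -(card_in_imset f_inj); suff -> : f @: A = B by [].
apply/setP => y.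
apply/imsetP/idP => [[x xA ->]|yB]; first exact: fA.
by exists (g y); [apply: gB | rewrite gK].
Qed.

Section PartitionsOfImage.
Variables (T U : finType) (f : U -> T).
Hypothesis f_inj : injective f.

Lemma imset_preimset_sub (B : {set T}) : B \subset f @: setT -> f @: (f @^-1: B) = B.
Proof.
move=> /subsetP sBf; apply/setP => y; apply/imsetP/idP => [[x]|yB].
  by rewrite inE => fxB ->.
by case/imsetP: (sBf y yB) => x _ fxy; exists x; rewrite // inE -fxy.
Qed.

Lemma preimset_imset (C : {set U}) : f @^-1: (f @: C) = C.
Proof. by apply/setP => x; rewrite inE (mem_imset _ _ f_inj). Qed.

Lemma card_partitions_imset :
  #|[set P : {set {set T}} | partition P (f @: setT)]|
    = #|[set Q : {set {set U}} | partition Q setT]|.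
Proof.
symmetry.
apply: (@card_in_bij _ _ _ _ (fun Q : {set {set U}} => [set f @: (C : {set U}) | C in Q])
                             (fun P => [set f @^-1: (B : {set T}) | B in P])).
- by move=> Q; rewrite !inE imset_partition.
- move=> P; rewrite !inE => P_part.
  rewrite -(imset_partition _ _ f_inj) -imset_comp.
  rewrite (eq_in_imset (g := id)) ?imset_id // => B BP /=.
  exact/imset_preimset_sub/(partitionS P_part).
- move=> Q _ /=; rewrite -imset_comp -[RHS]imset_id.
  by apply: eq_imset => C /=; rewrite preimset_imset.
- move=> P; rewrite inE => P_part /=; rewrite -imset_comp -[RHS]imset_id.
  apply: eq_in_imset => B BP /=.
  exact/imset_preimset_sub/(partitionS P_part).
Qed.

End PartitionsOfImage.

Section RespectingPartitions.
Variable T : finType.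
Implicit Types (D E : {set T}) (P X Y : {set {set T}}).

Definition respects D P := [forall B in P, (B \subset D) || (B \subset ~: D)].

Definition blocks_in D P := [set B in P | B \subset D].

Lemma respectsC D P : respects D P -> respects (~: D) P.
Proof.
move=> /forall_inP PD; apply/forall_inP => B BP.
by rewrite setCK orbC; apply: PD.
Qed.

Lemma partition_blocks_in D P :
  partition P setT -> respects D P -> partition (blocks_in D P) D.
Proof.
move=> P_part /forall_inP PD; apply/and3P; split.
- apply/eqP/setP => x; apply/bigcupP/idP => [[B]|xD].
    by rewrite inE => /andP[_ /subsetP sBD] /sBD.
  have : x \in cover P by rewrite (cover_partition P_part).
  case/bigcupP => B BP xB; exists B => //; rewrite inE BP /=.
  by case/orP: (PD B BP) => // /subsetP /(_ x xB); rewrite inE xD.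
- apply: trivIsetS (partition_trivIset P_part).
  by apply/subsetP => B; rewrite inE => /andP[].
- by rewrite inE (partition0 P_part).
Qed.

Lemma blocks_in_partition D X : partition X D -> blocks_in D X = X.
Proof.
move=> X_part; apply/setP => B; rewrite inE andb_idr //.
exact: partitionS X_part.
Qed.

Lemma blocks_in_disjoint D E X :
  partition X D -> [disjoint D & E] -> blocks_in E X = set0.
Proof.
move=> X_part DE; apply/setP => B; rewrite !inE; apply/negP => /andP[BX sBE].
case/set0Pn: (partition_neq0 X_part BX) => x xB.
have xD := subsetP (partitionS X_part BX) x xB.
by move: (subsetP sBE x xB); rewrite (disjointFr DE xD).
Qed.

Lemma blocks_inU D X Y : blocks_in D (X :|: Y) = blocks_in D X :|: blocks_in D Y.
Proof. by apply/setP => B; rewrite !inE andb_orl. Qed.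

Lemma partitionU X Y D E :
  partition X D -> partition Y E -> [disjoint D & E] -> partition (X :|: Y) (D :|: E).
Proof.
move=> X_part Y_part DE; apply/and3P; split.
- by rewrite /cover bigcup_setU -!/(cover _) (cover_partition X_part) (cover_partition Y_part).
- apply: trivIsetU; [exact: partition_trivIset X_part | exact: partition_trivIset Y_part|].
  by rewrite (cover_partition X_part) (cover_partition Y_part).
- by rewrite inE (partition0 X_part) (partition0 Y_part).
Qed.

Lemma card_respecting_partitions D :
  #|[set P | partition P setT & respects D P]|
    = #|[set X | partition X D]| * #|[set Y | partition Y (~: D)]|.
Proof.
have DC : [disjoint D & ~: D] by rewrite disjoints_subset setCK.
rewrite -cardsX; symmetry.
apply: (@card_in_bij _ _ _ _ (fun XY : {set {set T}} * {set {set T}} => XY.1 :|: XY.2)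
                             (fun P => (blocks_in D P, blocks_in (~: D) P))).
- case=> X Y; rewrite !inE /= => /andP[X_part Y_part].
  have := partitionU X_part Y_part DC; rewrite setUCr => -> /=.
  apply/forall_inP => B /setUP[BX|BY]; first by rewrite (partitionS X_part BX).
  by rewrite (partitionS Y_part BY) orbT.
- move=> P; rewrite !inE => /andP[P_part PD] /=.
  by rewrite !partition_blocks_in // respectsC.
- case=> X Y; rewrite !inE /= => /andP[X_part Y_part].
  rewrite !blocks_inU (blocks_in_partition X_part) (blocks_in_partition Y_part).
  rewrite (blocks_in_disjoint X_part DC) (blocks_in_disjoint Y_part) 1?disjoint_sym //.
  by rewrite setU0 set0U.
- move=> P; rewrite inE => /andP[_ /forall_inP PD] /=.
  by apply/setP => B; rewrite !inE -andb_orr; case BP: (B \in P); rewrite //= PD.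
Qed.

End RespectingPartitions.

Definition cut (n k : nat) : {set 'I_n} := [set i : 'I_n | i < k].

Lemma cut_widen_ord n k (hk : k <= n) : cut n k = widen_ord hk @: setT.
Proof.
apply/setP => i; rewrite inE; apply/idP/imsetP => [ik|[j _ ->] /=]; last exact: ltn_ord.
by exists (Ordinal ik) => //; apply/val_inj.
Qed.

Lemma card_cut n k : k <= n -> #|cut n k| = k.
Proof.
move=> hk; rewrite (cut_widen_ord hk) card_imset ?cardsT ?card_ord //.
by move=> i j /(congr1 val) ij; apply: val_inj.
Qed.

Lemma shift_subproof n k (j : 'I_(n - k)) : k + j < n.
Proof. by rewrite -ltn_subRL. Qed.

Definition shift_ord n k (j : 'I_(n - k)) : 'I_n := Ordinal (shift_subproof j).

Lemma shift_ord_inj n k : injective (@shift_ord n k).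
Proof. by move=> a b /(congr1 val) /addnI ab; apply/val_inj. Qed.

Lemma cutC_shift_ord n k : ~: cut n k = @shift_ord n k @: setT.
Proof.
apply/setP => i; rewrite !inE -leqNgt; apply/idP/imsetP => [ki|[j _ ->] /=]; last exact: leq_addr.
have ikn : i - k < n - k by have := ltn_ord i; lia.
by exists (Ordinal ikn) => //; apply/val_inj => /=; lia.
Qed.

Lemma card_partitions_respecting_cut n k : k <= n ->
  #|[set P | partition P setT & respects (cut n k) P]| = bell k * bell (n - k).
Proof.
move=> hk; rewrite card_respecting_partitions cutC_shift_ord (cut_widen_ord hk).
rewrite !card_partitions_imset //; first exact: shift_ord_inj.
by move=> i j /(congr1 val) ij; apply: val_inj.
Qed.

Lemma downward_closed_cut n (s : {set 'I_n}) :
  (forall i j : 'I_n, i < j -> j \in s -> i \in s) -> s = cut n #|s|.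
Proof.
move=> s_down; apply/setP => i; rewrite inE; apply/idP/idP => [si|].
  have : cut n i.+1 \subset s.
    apply/subsetP => j; rewrite inE ltnS leq_eqVlt => /orP[/eqP/val_inj -> //|ji].
    exact: s_down ji si.
  by move/subset_leq_card; rewrite card_cut.
apply: contraLR => si; rewrite -leqNgt -(card_cut (ltnW (ltn_ord i))).
apply/subset_leq_card/subsetP => j js; rewrite inE ltnNge.
apply: contra si; rewrite leq_eqVlt => /orP[/eqP/val_inj -> //|ij].
exact: s_down ij js.
Qed.

Definition cut_colouring n k : {ffun 'I_n -> 'I_2} :=
  [ffun i : 'I_n => if i < k then col2 else col1].

Lemma cut_colouring2 n k (i : 'I_n) : (cut_colouring n k i == col2) = (i < k).
Proof. by rewrite ffunE; case: (i < k). Qed.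

Lemma cut_colouring1 n k (i : 'I_n) : (cut_colouring n k i == col1) = (k <= i).
Proof. by rewrite ffunE; case: ltnP. Qed.

Lemma colour_neq2 (a : 'I_2) : a != col2 -> a = col1.
Proof. by move=> a_ne2; apply/val_inj; move: a_ne2; case: a => [[|[|m]]]. Qed.

Lemma colouring_cut n (x : colored_partition n) :
  ~~ contains_1112 x -> ~~ contains_1122 x ->
  x.2 = cut_colouring n #|[set i | x.2 i == col2]|.
Proof.
case: x => P c /= no1112 no1122.
have col2_down : forall i j : 'I_n, i < j -> j \in [set i | c i == col2] ->
    i \in [set i | c i == col2].
  move=> i j ij; rewrite !inE => cj; apply: contraT => /colour_neq2 ci.
  case sb: (same_block P i j); [move: no1112 | move: no1122];
    by move=> /existsPn/(_ i)/existsPn/(_ j); rewrite /= ij sb ci cj !eqxx.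
have /setP cutE := downward_closed_cut col2_down.
apply/ffunP => i; have := cutE i; rewrite !inE ffunE.
by case: ifP => [_ /eqP //|_ /negbT/colour_neq2].
Qed.

Lemma avoiders_respect_cut n k (x : colored_partition n) :
  x \in avoiders n -> x.2 = cut_colouring n k -> respects (cut n k) x.1.
Proof.
case: x => P c; rewrite inE => /and4P[_ _ _ no1211] /= c_cut.
move: no1211; rewrite /contains_1211 {}c_cut => no1211.
apply/forall_inP => B BP; apply/orP.
case: (boolP (B \subset cut n k)) => [|/subsetPn[j jB kj]]; [by left|right].
move: kj; rewrite inE -leqNgt => kj.
apply/subsetP => i iB; rewrite !inE; apply/negP => ik; move/negP: no1211; apply.
apply/existsP; exists i; apply/existsP; exists j.
rewrite /= cut_colouring2 cut_colouring1 ik kj (leq_trans ik kj) !andbT /=.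
by apply/existsP; exists B; rewrite BP iB jB.
Qed.

Lemma cut_colouring_avoiders n k P :
  partition P setT -> respects (cut n k) P -> (P, cut_colouring n k) \in avoiders n.
Proof.
move=> P_part /forall_inP P_cut; rewrite inE /is_cpart P_part /=.
apply/and3P; split; apply/existsPn => i; apply/existsPn => j;
  rewrite /= ?cut_colouring1 ?cut_colouring2; apply/negP.
- by case/and4P => ij _ ki jk; lia.
- by case/and4P => ij _ ki jk; lia.
- case/and4P => _ /existsP[B /and3P[BP iB jB]] ik kj.
  case/orP: (P_cut B BP) => /subsetP sB; first by move: (sB j jB); rewrite inE ltnNge kj.
  by move: (sB i iB); rewrite !inE ik.
Qed.

Definition col2_count n (x : colored_partition n) : 'I_n.+1 :=
  inord #|[set i | x.2 i == col2]|.

Lemma card_avoiders_col2_count n (k : 'I_n.+1) :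
  #|[set x in avoiders n | col2_count x == k]| = bell k * bell (n - k).
Proof.
have kn : k <= n by rewrite -ltnS.
have col2_countE (x : colored_partition n) :
    col2_count x == k -> #|[set i | x.2 i == col2]| = k.
  move=> /eqP <-; rewrite inordK // ltnS.
  by apply: leq_trans (max_card _) _; rewrite card_ord.
have colouringE (x : colored_partition n) :
    x \in avoiders n -> col2_count x == k -> x.2 = cut_colouring n k.
  move=> xA /col2_countE <-; move: xA; rewrite inE => /and4P[_ no1112 no1122 _].
  exact: colouring_cut.
rewrite -(card_partitions_respecting_cut kn).
apply: (@card_in_bij _ _ _ _ fst (fun P => (P, cut_colouring n k))).
- move=> x; rewrite inE => /andP[xA xk]; rewrite inE; apply/andP; split.
    by move: xA; rewrite inE => /and4P[].
  exact: avoiders_respect_cut xA (colouringE x xA xk).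
- move=> P; rewrite !inE => /andP[P_part P_cut].
  have := cut_colouring_avoiders P_part P_cut; rewrite inE => -> /=.
  rewrite /col2_count /=.
  have -> : [set i | cut_colouring n k i == col2] = cut n k.
    by apply/setP => i; rewrite !inE cut_colouring2.
  by apply/eqP/val_inj; rewrite /= card_cut // inordK.
- by case=> P c; rewrite inE => /andP[xA xk] /=; rewrite -(colouringE _ xA xk).
- by [].
Qed.

Theorem mainTheorem16 (n : nat) : 1 <= n ->
  #|avoiders n| = \sum_(0 <= i < n.+1) bell i * bell (n - i).
Proof.
(* The formula also holds for n = 0. *)
move=> _; rewrite big_mkord -sum1_card (partition_big (@col2_count n) xpredT) //=.
apply: eq_bigr => k _; rewrite -card_avoiders_col2_count -sum1_card.
by apply: eq_bigl => x; rewrite inE.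
Qed.
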